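(* Let $\{\tilde\alpha,\tilde\beta\}$ be a dual timelike - spacelike Mannheim pair in $ID_1^3$. Then the dual curvature $P$ and dual torsion $Q$ of $\tilde\beta$ and the dual torsion $\tau$ of $\tilde\alpha$ satisfy $$P^2-Q^2=\tau^2\left(\frac{ds}{ds^*}\right)^2.$$
   Context: Dual numbers: $ID=\{a+\varepsilon a^*: a,a^*\in\mathbb R\}$ with $\varepsilon^2=0$. $ID_1^3$ is $ID^3$ with dual Lorentzian inner product $\langle \vec A,\vec B\rangle=\langle\vec a,\vec b\rangle+\varepsilon(\langle\vec a,\vec b^*\rangle+\langle\vec a^*,\vec b\rangle)$, $\langle\vec a,\vec b\rangle=-a_1b_1+a_2b_2+a_3b_3$. $\tilde\alpha$ is a dual timelike curve with dual arc length $s$, Frenet frame $\{T,N,B\}$ ($T$ timelike, $N,B$ spacelike unit), $T'=\kappa N$, $N'=\kappa T+\tau B$, $B'=-\tau N$. $\tilde\beta$ is a dual spacelike curve with dual timelike binormal, arc length $s^*$, frame $\{V_1,V_2,V_3\}$ ($V_3$ timelike), $V_1'=PV_2$, $V_2'=-PV_1+QV_3$, $V_3'=QV_2$. A dual timelike - spacelike Mannheim pair means that under a correspondence $s\mapsto s^*$ the dual binormal line of $\tilde\alpha$ coincides with the dual principal normal line of $\tilde\beta$ at corresponding points, i.e. $\tilde\beta(s^* )=\tilde\alpha(s)+\lambda B(s)$. *)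

From Stdlib Require Import Reals.
From Coquelicot Require Import Coquelicot.
Open Scope R_scope.

(** Dual numbers ID = { a + eps a_ }, eps^2 = 0. *)
Record dual := mkD { re : R; du : R }.

Definition dzero : dual := mkD 0 0.
Definition done_ : dual := mkD 1 0.
Definition dadd (x y : dual) : dual := mkD (re x + re y) (du x + du y).
Definition dopp (x : dual) : dual := mkD (- re x) (- du x).
Definition dsub (x y : dual) : dual := dadd x (dopp y).
Definition dmul (x y : dual) : dual :=
  mkD (re x * re y) (re x * du y + du x * re y).
(* inverse of a dual number with nonzero real part:
   (a + eps a')^-1 = 1/a - eps a'/a^2 *)
Definition dinv (x : dual) : dual := mkD (/ re x) (- du x / (re x * re x)).
Definition ddiv (x y : dual) : dual := dmul x (dinv y).
Definition dsq (x : dual) : dual := dmul x x.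

Record dvec := mkV { c1 : dual; c2 : dual; c3 : dual }.

Definition vadd (A B : dvec) : dvec :=
  mkV (dadd (c1 A) (c1 B)) (dadd (c2 A) (c2 B)) (dadd (c3 A) (c3 B)).
Definition vscale (k : dual) (A : dvec) : dvec :=
  mkV (dmul k (c1 A)) (dmul k (c2 A)) (dmul k (c3 A)).
Definition vopp (A : dvec) : dvec := vscale (dopp done_) A.

(** Dual Lorentzian inner product on ID^3_1:
    <A,B> = -A1 B1 + A2 B2 + A3 B3 computed in the dual numbers, which is
    exactly <a,b> + eps (<a,b_> + <a_,b>). *)
Definition dinner (A B : dvec) : dual :=
  dadd (dopp (dmul (c1 A) (c1 B))) (dadd (dmul (c2 A) (c2 B)) (dmul (c3 A) (c3 B))).

Definition dual_derive (f : R -> dual) (t : R) (d : dual) : Prop :=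
  is_derive (fun u => re (f u)) t (re d) /\ is_derive (fun u => du (f u)) t (du d).

Definition vec_derive (F : R -> dvec) (t : R) (D : dvec) : Prop :=
  dual_derive (fun u => c1 (F u)) t (c1 D) /\
  dual_derive (fun u => c2 (F u)) t (c2 D) /\
  dual_derive (fun u => c3 (F u)) t (c3 D).

(** Dual timelike curve alpha with dual arc length s (ds/dt = sigma) and
    Frenet frame {T,N,B}, T timelike, N, B spacelike:
    dT/ds = kappa N, dN/ds = kappa T + tau B, dB/ds = - tau N,
    where d/ds = (1/sigma) d/dt, i.e. d/dt = sigma d/ds. *)
Definition timelike_frenet (alpha T N Bn : R -> dvec) (s sigma kappa tau : R -> dual)
  : Prop :=
  forall t,
    re (sigma t) <> 0 /\
    dual_derive s t (sigma t) /\
    vec_derive alpha t (vscale (sigma t) (T t)) /\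
    dinner (T t) (T t) = dopp done_ /\
    dinner (N t) (N t) = done_ /\
    dinner (Bn t) (Bn t) = done_ /\
    dinner (T t) (N t) = dzero /\
    dinner (T t) (Bn t) = dzero /\
    dinner (N t) (Bn t) = dzero /\
    vec_derive T t (vscale (sigma t) (vscale (kappa t) (N t))) /\
    vec_derive N t (vscale (sigma t)
                      (vadd (vscale (kappa t) (T t)) (vscale (tau t) (Bn t)))) /\
    vec_derive Bn t (vscale (sigma t) (vopp (vscale (tau t) (N t)))).

(** Dual spacelike curve beta with dual timelike binormal V3, dual arc
    length s^ (ds^/dt = sigmas), Frenet frame {V1,V2,V3}:
    V1' = P V2, V2' = - P V1 + Q V3, V3' = Q V2  (derivatives in s^). *)
Definition spacelike_tbinormal_frenet (beta V1 V2 V3 : R -> dvec)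
  (ss sigmas P Q : R -> dual) : Prop :=
  forall t,
    re (sigmas t) <> 0 /\
    dual_derive ss t (sigmas t) /\
    vec_derive beta t (vscale (sigmas t) (V1 t)) /\
    dinner (V1 t) (V1 t) = done_ /\
    dinner (V2 t) (V2 t) = done_ /\
    dinner (V3 t) (V3 t) = dopp done_ /\
    dinner (V1 t) (V2 t) = dzero /\
    dinner (V1 t) (V3 t) = dzero /\
    dinner (V2 t) (V3 t) = dzero /\
    vec_derive V1 t (vscale (sigmas t) (vscale (P t) (V2 t))) /\
    vec_derive V2 t (vscale (sigmas t)
                       (vadd (vopp (vscale (P t) (V1 t))) (vscale (Q t) (V3 t)))) /\
    vec_derive V3 t (vscale (sigmas t) (vscale (Q t) (V2 t))).

(** Dual timelike - spacelike Mannheim pair: at corresponding points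
    (same parameter t) the dual binormal line of alpha coincides with the
    dual principal normal line of beta: beta = alpha + lambda B and the unit
    directions agree up to sign (V2 = +-B). *)
Definition mannheim_pair (alpha Bn beta V2 : R -> dvec) (lambda : R -> dual) : Prop :=
  forall t,
    beta t = vadd (alpha t) (vscale (lambda t) (Bn t)) /\
    (V2 t = Bn t \/ V2 t = vopp (Bn t)).

(** Along a Mannheim pair the principal normal [V2] of [beta] equals [+-B] with
    [B] the binormal of [alpha]; the sign is locally constant, so differentiating
    gives [V2' = +-B'], whence both derivatives have the same Lorentzian square.
    By the two Frenet systems, that square is [sigmas^2 (P^2 - Q^2)] for [V2'] and
    [sigma^2 tau^2] for [B']; dividing by [sigmas^2] gives the claim. *)

From Pilot Require Import Defs.
From Stdlib Require Import Reals Lra.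
From Coquelicot Require Import Coquelicot.
(* Coquelicot also defines [c1]; re-importing gives [Defs] precedence. *)
Import Pilot.Defs.

Lemma dual_eq (x y : dual) : re x = re y -> du x = du y -> x = y.
Proof. destruct x, y; simpl; intros; subst; reflexivity. Qed.

Lemma dvec_eq (A B : dvec) : c1 A = c1 B -> c2 A = c2 B -> c3 A = c3 B -> A = B.
Proof. destruct A, B; simpl; intros; subst; reflexivity. Qed.

Ltac dual_ring := apply dual_eq; simpl; ring.

Lemma dinner_vscale_l (k : dual) (A B : dvec) :
  dinner (vscale k A) B = dmul k (dinner A B).
Proof. destruct A, B; unfold dinner; simpl; dual_ring. Qed.

Lemma dinner_vscale_r (k : dual) (A B : dvec) :
  dinner A (vscale k B) = dmul k (dinner A B).
Proof. destruct A, B; unfold dinner; simpl; dual_ring. Qed.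

Lemma dinner_vadd_l (A B C : dvec) :
  dinner (vadd A B) C = dadd (dinner A C) (dinner B C).
Proof. destruct A, B, C; unfold dinner; simpl; dual_ring. Qed.

Lemma dinner_vadd_r (A B C : dvec) :
  dinner A (vadd B C) = dadd (dinner A B) (dinner A C).
Proof. destruct A, B, C; unfold dinner; simpl; dual_ring. Qed.

Lemma dinner_sym (A B : dvec) : dinner A B = dinner B A.
Proof. destruct A, B; unfold dinner; simpl; dual_ring. Qed.

Lemma dinner_vopp_self (A : dvec) : dinner (vopp A) (vopp A) = dinner A A.
Proof. destruct A; unfold dinner; simpl; dual_ring. Qed.

Lemma dinner_self_spacelike_timelike_combination (X Y : dvec) (a b c : dual) :
  dinner X X = done_ -> dinner Y Y = dopp done_ -> dinner X Y = dzero ->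
  let Z := vscale c (vadd (vopp (vscale a X)) (vscale b Y)) in
  dinner Z Z = dmul (dsq c) (dsub (dsq a) (dsq b)).
Proof.
  intros HX HY HXY; simpl; unfold vopp.
  rewrite !dinner_vscale_l, !dinner_vscale_r, !dinner_vadd_l, !dinner_vadd_r.
  rewrite !dinner_vscale_l, !dinner_vscale_r, (dinner_sym Y X), HX, HY, HXY.
  dual_ring.
Qed.

Lemma dinner_self_scaled_unit (N : dvec) (a c : dual) :
  dinner N N = done_ ->
  let Z := vscale c (vopp (vscale a N)) in dinner Z Z = dmul (dsq c) (dsq a).
Proof.
  intros HN; simpl; unfold vopp.
  rewrite !dinner_vscale_l, !dinner_vscale_r, HN; dual_ring.
Qed.

Lemma dual_sq_cancel (a b x y : dual) :
  re a <> 0 -> dmul (dsq a) x = dmul (dsq b) y -> x = dmul y (dsq (ddiv b a)).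
Proof.
  destruct a as [a a'], b as [b b'], x as [x x'], y as [y y']; simpl.
  intros Ha E; injection E; clear E; intros Edu Ere.
  apply dual_eq; simpl.
  - apply (Rmult_eq_reg_l (a * a)); [| now apply Rmult_integral_contrapositive].
    field_simplify; [nra | exact Ha].
  - apply (Rmult_eq_reg_l (a * a * a));
      [| now repeat apply Rmult_integral_contrapositive_currified].
    field_simplify; [| exact Ha].
    pose proof (f_equal (Rmult a) Edu); pose proof (f_equal (Rmult a') Ere); lra.
Qed.


Lemma is_derive_Rmult (f g : R -> R) (t df dg : R) :
  is_derive f t df -> is_derive g t dg ->
  is_derive (fun u => f u * g u) t (df * g t + f t * dg).
Proof. intros Hf Hg; apply (is_derive_mult f g); auto using Rmult_comm. Qed.

Lemma dual_derive_unique (f : R -> dual) (t : R) (d e : dual) :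
  dual_derive f t d -> dual_derive f t e -> d = e.
Proof.
  intros [Hr Hd] [Er Ed].
  apply dual_eq.
  - now rewrite <- (is_derive_unique _ _ _ Hr), (is_derive_unique _ _ _ Er).
  - now rewrite <- (is_derive_unique _ _ _ Hd), (is_derive_unique _ _ _ Ed).
Qed.

Lemma vec_derive_unique (F : R -> dvec) (t : R) (D E : dvec) :
  vec_derive F t D -> vec_derive F t E -> D = E.
Proof.
  intros (H1 & H2 & H3) (E1 & E2 & E3).
  apply dvec_eq; eapply dual_derive_unique; eassumption.
Qed.

Lemma vec_derive_ext_loc (F G : R -> dvec) (t : R) (D : dvec) :
  locally t (fun u => F u = G u) -> vec_derive F t D -> vec_derive G t D.
Proof.
  intros HFG ((a1 & b1) & (a2 & b2) & (a3 & b3)).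
  repeat split; (eapply is_derive_ext_loc; [| eassumption]);
    (eapply filter_imp; [| exact HFG]); intros u Hu; now rewrite Hu.
Qed.

Lemma dual_derive_add (f g : R -> dual) (t : R) (df dg : dual) :
  dual_derive f t df -> dual_derive g t dg ->
  dual_derive (fun u => dadd (f u) (g u)) t (dadd df dg).
Proof.
  intros [fr fd] [gr gd]; split; simpl.
  - exact (is_derive_plus _ _ _ _ _ fr gr).
  - exact (is_derive_plus _ _ _ _ _ fd gd).
Qed.

Lemma dual_derive_opp (f : R -> dual) (t : R) (df : dual) :
  dual_derive f t df -> dual_derive (fun u => dopp (f u)) t (dopp df).
Proof.
  intros [fr fd]; split; simpl.
  - exact (is_derive_opp _ _ _ fr).
  - exact (is_derive_opp _ _ _ fd).
Qed.

Lemma dual_derive_mul (f g : R -> dual) (t : R) (df dg : dual) :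
  dual_derive f t df -> dual_derive g t dg ->
  dual_derive (fun u => dmul (f u) (g u)) t
    (dadd (dmul df (g t)) (dmul (f t) dg)).
Proof.
  intros [fr fd] [gr gd]; split; simpl.
  - now apply is_derive_Rmult.
  - pose proof (is_derive_plus _ _ _ _ _ (is_derive_Rmult _ _ _ _ _ fr gd)
                                  (is_derive_Rmult _ _ _ _ _ fd gr)) as H.
    unfold plus in H; simpl in H.
    match type of H with is_derive _ _ ?l =>
      match goal with |- is_derive _ _ ?l' => replace l' with l by ring end end.
    exact H.
Qed.

Lemma dual_derive_const (k : dual) (t : R) : dual_derive (fun _ => k) t dzero.
Proof. split; exact (is_derive_const _ t). Qed.

Lemma dual_derive_scal (k : dual) (f : R -> dual) (t : R) (df : dual) :
  dual_derive f t df -> dual_derive (fun u => dmul k (f u)) t (dmul k df).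
Proof.
  intros Hf.
  replace (dmul k df) with (dadd (dmul dzero (f t)) (dmul k df)) by dual_ring.
  exact (dual_derive_mul _ _ _ _ _ (dual_derive_const k t) Hf).
Qed.

Lemma vec_derive_vopp (F : R -> dvec) (t : R) (D : dvec) :
  vec_derive F t D -> vec_derive (fun u => vopp (F u)) t (vopp D).
Proof. intros (H1 & H2 & H3); split; [| split]; now apply dual_derive_scal. Qed.

Lemma dual_derive_dinner (F G : R -> dvec) (t : R) (DF DG : dvec) :
  vec_derive F t DF -> vec_derive G t DG ->
  dual_derive (fun u => dinner (F u) (G u)) t
    (dadd (dinner DF (G t)) (dinner (F t) DG)).
Proof.
  intros (F1 & F2 & F3) (G1 & G2 & G3).
  pose proof (dual_derive_add _ _ _ _ _
    (dual_derive_opp _ _ _ (dual_derive_mul _ _ _ _ _ F1 G1))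
    (dual_derive_add _ _ _ _ _ (dual_derive_mul _ _ _ _ _ F2 G2)
                               (dual_derive_mul _ _ _ _ _ F3 G3))) as H.
  match type of H with dual_derive _ _ ?d =>
    replace (dadd (dinner DF (G t)) (dinner (F t) DG)) with d
      by (unfold dinner; dual_ring) end.
  exact H.
Qed.

Lemma dual_derive_continuous_re (f : R -> dual) (t : R) (d : dual) :
  dual_derive f t d -> continuous (fun u => re (f u)) t.
Proof.
  intros [Hr _]; apply (ex_derive_continuous (K := R_AbsRing) (V := R_NormedModule)).
  now exists (re d).
Qed.


(* The sign is read off the continuous function [re <F, G>], which only takes the
   values [1] and [-1]. *)
Lemma unit_sign_locally_constant (F G : R -> dvec) (t : R) (DF DG : dvec) :
  (forall u, dinner (G u) (G u) = done_) ->
  (forall u, F u = G u \/ F u = vopp (G u)) ->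
  vec_derive F t DF -> vec_derive G t DG ->
  locally t (fun u => F u = G u) \/ locally t (fun u => F u = vopp (G u)).
Proof.
  intros HG Hsign HF HDG.
  set (g u := re (dinner (F u) (G u))).
  assert (g_pos : forall u, F u = G u -> g u = 1).
  { intros u E; unfold g; now rewrite E, HG. }
  assert (g_neg : forall u, F u = vopp (G u) -> g u = -1).
  { intros u E; unfold g; rewrite E; unfold vopp, dinner; simpl.
    pose proof (f_equal re (HG u)) as H; unfold dinner in H; simpl in H; lra. }
  assert (near_gt : locally t (fun u => Rabs (g u - g t) < 1)).
  { pose proof (dual_derive_continuous_re _ _ _ (dual_derive_dinner _ _ _ _ _ HF HDG))
      as Hc.
    exact (proj1 (filterlim_locally g (g t)) Hc (mkposreal 1 Rlt_0_1)). }
  destruct (Hsign t) as [Et | Et]; [left | right];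
    (eapply filter_imp; [| exact near_gt]); intros u Hu;
    cbv beta in Hu; destruct (Hsign u) as [Eu | Eu]; try exact Eu; exfalso.
  - rewrite (g_neg u Eu), (g_pos t Et) in Hu; apply Rabs_def2 in Hu; lra.
  - rewrite (g_pos u Eu), (g_neg t Et) in Hu; apply Rabs_def2 in Hu; lra.
Qed.

Lemma vec_derive_unit_sign (F G : R -> dvec) (t : R) (DF DG : dvec) :
  (forall u, dinner (G u) (G u) = done_) ->
  (forall u, F u = G u \/ F u = vopp (G u)) ->
  vec_derive F t DF -> vec_derive G t DG -> DF = DG \/ DF = vopp DG.
Proof.
  intros HG Hsign HF HDG.
  destruct (unit_sign_locally_constant F G t DF DG HG Hsign HF HDG) as [L | L];
    [left | right]; apply (vec_derive_unique F t DF); [exact HF | | exact HF |].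
  - apply (vec_derive_ext_loc G); [| exact HDG].
    eapply filter_imp; [| exact L]; intros u Hu; now symmetry.
  - apply (vec_derive_ext_loc (fun u => vopp (G u))); [| now apply vec_derive_vopp].
    eapply filter_imp; [| exact L]; intros u Hu; now symmetry.
Qed.

Theorem corollary3p4
  (alpha T N Bn : R -> dvec) (s sigma kappa tau : R -> dual)
  (beta V1 V2 V3 : R -> dvec) (ss sigmas P Q : R -> dual)
  (lambda : R -> dual) :
  timelike_frenet alpha T N Bn s sigma kappa tau ->
  spacelike_tbinormal_frenet beta V1 V2 V3 ss sigmas P Q ->
  mannheim_pair alpha Bn beta V2 lambda ->
  forall t : R,
    dsub (dsq (P t)) (dsq (Q t)) =
    dmul (dsq (tau t)) (dsq (ddiv (sigma t) (sigmas t))).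
Proof.
  intros Halpha Hbeta Hpair t.
  assert (B_unit : forall u, dinner (Bn u) (Bn u) = done_) by (intro u; apply Halpha).
  assert (V2_sign : forall u, V2 u = Bn u \/ V2 u = vopp (Bn u)) by (intro u; apply Hpair).
  destruct (Halpha t) as (_ & _ & _ & _ & N_unit & _ & _ & _ & _ & _ & _ & dB).
  destruct (Hbeta t) as (sigmas_nz & _ & _ & V1_unit & _ & V3_unit & _ & V1V3 & _ & _ & dV2 & _).
  assert (same_square : forall D E : dvec, D = E \/ D = vopp E -> dinner D D = dinner E E).
  { intros D E [-> | ->]; [reflexivity | apply dinner_vopp_self]. }
  pose proof (same_square _ _ (vec_derive_unit_sign V2 Bn t _ _ B_unit V2_sign dV2 dB))
    as Hsq.
  rewrite (dinner_self_spacelike_timelike_combination _ _ _ _ _ V1_unit V3_unit V1V3),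
    (dinner_self_scaled_unit _ _ _ N_unit) in Hsq.
  exact (dual_sq_cancel _ _ _ _ sigmas_nz Hsq).
Qed.
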